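(* $\mathrm{PL}$ and $\mathrm{ML}$ (in team semantics) admit counter-model merging: for arbitrary sets $\Gamma,\Delta$ of formulas of the logic, if for every $\delta\in\Delta$ there is a valuation satisfying all of $\Gamma$ and not satisfying $\delta$, then there is a single valuation satisfying all of $\Gamma$ and not satisfying any $\delta\in\Delta$.
   Context: $\mathrm{PL}$: formulas built from a countably infinite set of atoms with $\neg,\to$; a valuation is a team $T$, a (possibly empty) set of assignments of truth values to the atoms, and $T\models\alpha$ iff every $s\in T$ satisfies $\alpha$ classically. $\mathrm{ML}$: formulas built from atoms with $\neg,\to,\Box$; a valuation is a pair $(\mathcal K,T)$ with $\mathcal K=(W,R,V)$ a Kripke structure and $T\subseteq W$, and $(\mathcal K,T)\models\alpha$ iff $(\mathcal K,w)\models\alpha$ in standard Kripke semantics for all $w\in T$. *)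

Inductive pl_form : Type :=
| PAtom : nat -> pl_form
| PNeg  : pl_form -> pl_form
| PImp  : pl_form -> pl_form -> pl_form.

Definition assignment := nat -> bool.

Fixpoint pl_sat (s : assignment) (a : pl_form) : Prop :=
  match a with
  | PAtom p => s p = true
  | PNeg b => ~ pl_sat s b
  | PImp b c => pl_sat s b -> pl_sat s c
  end.

Definition pl_team := assignment -> Prop.

Definition pl_team_sat (T : pl_team) (a : pl_form) : Prop :=
  forall s, T s -> pl_sat s a.

Inductive ml_form : Type :=
| MAtom : nat -> ml_form
| MNeg  : ml_form -> ml_form
| MImp  : ml_form -> ml_form -> ml_form
| MBox  : ml_form -> ml_form.

Fixpoint ml_sat {W : Type} (R : W -> W -> Prop) (V : nat -> W -> Prop)
  (w : W) (a : ml_form) : Prop :=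
  match a with
  | MAtom p => V p w
  | MNeg b => ~ ml_sat R V w b
  | MImp b c => ml_sat R V w b -> ml_sat R V w c
  | MBox b => forall v, R w v -> ml_sat R V v b
  end.

Definition ml_team_sat {W : Type} (R : W -> W -> Prop) (V : nat -> W -> Prop)
  (T : W -> Prop) (a : ml_form) : Prop :=
  forall w, T w -> ml_sat R V w a.

Definition pl_counter_model_merging : Prop :=
  forall (Gamma Delta : pl_form -> Prop),
    (forall d, Delta d ->
       exists T : pl_team,
         (forall g, Gamma g -> pl_team_sat T g) /\ ~ pl_team_sat T d) ->
    exists T : pl_team,
      (forall g, Gamma g -> pl_team_sat T g) /\
      (forall d, Delta d -> ~ pl_team_sat T d).

(* Counter-model merging for ML: valuations are pairs (K, T) with
   K = (W, R, V) an arbitrary Kripke structure and T a subset of W. *)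
Definition ml_counter_model_merging : Prop :=
  forall (Gamma Delta : ml_form -> Prop),
    (forall d, Delta d ->
       exists (W : Type) (R : W -> W -> Prop) (V : nat -> W -> Prop) (T : W -> Prop),
         (forall g, Gamma g -> ml_team_sat R V T g) /\ ~ ml_team_sat R V T d) ->
    exists (W : Type) (R : W -> W -> Prop) (V : nat -> W -> Prop) (T : W -> Prop),
      (forall g, Gamma g -> ml_team_sat R V T g) /\
      (forall d, Delta d -> ~ ml_team_sat R V T d).

(* PL: the team of all assignments satisfying Gamma contains every team
   satisfying Gamma, and team satisfaction is downward closed, so this single
   team refutes every delta that some Gamma-team refutes.
   ML: take the disjoint union of one chosen counter-model per delta; a world
   of a summand satisfies the same formulas in the sum, so the union of the
   chosen teams satisfies Gamma and refutes each delta in its own summand. *)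

From Stdlib Require Import ClassicalEpsilon.

Definition pl_theory_team (Gamma : pl_form -> Prop) : pl_team :=
  fun s => forall g, Gamma g -> pl_sat s g.

Lemma pl_team_sat_sub (T T' : pl_team) (a : pl_form) :
  (forall s, T s -> T' s) -> pl_team_sat T' a -> pl_team_sat T a.
Proof. intros HTT' HT' s Hs. exact (HT' s (HTT' s Hs)). Qed.

Lemma pl_theory_team_sat (Gamma : pl_form -> Prop) g :
  Gamma g -> pl_team_sat (pl_theory_team Gamma) g.
Proof. intros Hg s Hs. exact (Hs g Hg). Qed.

Lemma pl_theory_team_max (Gamma : pl_form -> Prop) (T : pl_team) :
  (forall g, Gamma g -> pl_team_sat T g) ->
  forall s, T s -> pl_theory_team Gamma s.
Proof. intros HT s Hs g Hg. exact (HT g Hg s Hs). Qed.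

Theorem pl_counter_model_merging_holds : pl_counter_model_merging.
Proof.
  intros Gamma Delta HDelta.
  exists (pl_theory_team Gamma). split.
  - exact (pl_theory_team_sat Gamma).
  - intros d Hd Hsat.
    destruct (HDelta d Hd) as [T [HT Hrefute]].
    exact (Hrefute (pl_team_sat_sub T _ d (pl_theory_team_max Gamma T HT) Hsat)).
Qed.

Record team_model := {
  tm_world : Type;
  tm_rel : tm_world -> tm_world -> Prop;
  tm_val : nat -> tm_world -> Prop;
  tm_team : tm_world -> Prop
}.

Definition tm_sat (M : team_model) (a : ml_form) : Prop :=
  ml_team_sat (tm_rel M) (tm_val M) (tm_team M) a.

Section DisjointUnion.

Variables (I : Type) (M : I -> team_model).

Definition sum_world : Type := { i : I & tm_world (M i) }.

Inductive sum_rel : sum_world -> sum_world -> Prop :=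
  | sum_rel_in i w v :
      tm_rel (M i) w v -> sum_rel (existT _ i w) (existT _ i v).

Definition sum_val (p : nat) (x : sum_world) : Prop :=
  tm_val (M (projT1 x)) p (projT2 x).

Definition sum_team (x : sum_world) : Prop :=
  tm_team (M (projT1 x)) (projT2 x).

Definition tm_sum : team_model := Build_team_model sum_world sum_rel sum_val sum_team.

Lemma ml_sat_sum (a : ml_form) (x : sum_world) :
  ml_sat sum_rel sum_val x a <->
  ml_sat (tm_rel (M (projT1 x))) (tm_val (M (projT1 x))) (projT2 x) a.
Proof.
  revert x; induction a as [p | b IHb | b IHb c IHc | b IHb]; intros x; simpl.
  - reflexivity.
  - rewrite IHb; reflexivity.
  - rewrite IHb, IHc; reflexivity.
  - split.
    + intros Hbox v Hv. apply (IHb (existT _ (projT1 x) v)).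
      apply Hbox. destruct x as [i w]. constructor. exact Hv.
    + intros Hbox y Hxy. apply IHb.
      destruct Hxy as [i w v Hwv]. exact (Hbox v Hwv).
Qed.

Lemma tm_sat_sum (a : ml_form) : tm_sat tm_sum a <-> forall i, tm_sat (M i) a.
Proof.
  split.
  - intros Hsum i w Hw. apply (ml_sat_sum a (existT _ i w)). exact (Hsum (existT _ i w) Hw).
  - intros Hall x Hx. apply ml_sat_sum. exact (Hall (projT1 x) (projT2 x) Hx).
Qed.

End DisjointUnion.

Theorem ml_counter_model_merging_holds : ml_counter_model_merging.
Proof.
  intros Gamma Delta HDelta.
  set (I := { d : ml_form | Delta d }).
  assert (Hex : forall i : I, exists M : team_model,
             (forall g, Gamma g -> tm_sat M g) /\ ~ tm_sat M (proj1_sig i)).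
  { intros [d Hd]. destruct (HDelta d Hd) as [W [R [V [T HM]]]].
    exists (Build_team_model W R V T). exact HM. }
  destruct (choice _ Hex) as [M HM].
  exists (sum_world I M), (sum_rel I M), (sum_val I M), (sum_team I M). split.
  - intros g Hg. apply (tm_sat_sum I M g). intros i. exact (proj1 (HM i) g Hg).
  - intros d Hd Hsat.
    apply (proj2 (HM (exist _ d Hd))).
    exact (proj1 (tm_sat_sum I M d) Hsat (exist _ d Hd)).
Qed.

Theorem mainTheorem3 : pl_counter_model_merging /\ ml_counter_model_merging.
Proof.
  split.
  - exact pl_counter_model_merging_holds.
  - exact ml_counter_model_merging_holds.
Qed.
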